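(* Assume $K_1\subseteq K_2\subseteq\cdots\subseteq K_n\subseteq\mathbb F_q$ are subfields, $d_i=|K_i|$, $n\ge 2$. Let $\delta\ge 2$, $s\in\{1,\dots,n\}$ with $r:=d_s-\delta+1\ge 1$, and let $d=\sum_{i=1}^k(d_i-1)+\ell$ with $0\le k<n$ and $0<\ell\le d_{k+1}-1$. Assume that $n=k+1$ or $d_1\ge 3$. Assume that neither (i) [$k+2\le n$ and $d_{k+2}\le d_s$] nor (ii) [$d_s\le d_{k+1}$ and $0\le d_s-(d_{k+1}-\ell)<r$] holds, and that $d_s-(d_{k+1}-\ell)=r$. Then $$W^{(1)}(\mathcal D^{(\delta,s)}_{\mathcal X}(d))=\begin{cases} d_n-\ell+1 & \text{if } n=k+1,\\ (d_{k+1}-\ell+1)(d_{k+2}-1)\prod_{i=k+3}^n d_i & \text{if } n>k+1.\end{cases}$$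
   Context: $\mathcal X=K_1\times\cdots\times K_n=\{\boldsymbol\alpha_1,\dots,\boldsymbol\alpha_m\}$ (fixed enumeration), $m=\prod d_i$; $\Psi:\mathbb F_q[X_1,\dots,X_n]\to\mathbb F_q^m$, $f\mapsto(f(\boldsymbol\alpha_1),\dots,f(\boldsymbol\alpha_m))$. For $d\ge 0$, $\mathbb F_q[X_1,\dots,X_n]_{\le d}$ is the space of polynomials of degree at most $d$ together with $0$. $\mathcal P^{(\delta,s)}_d$ is the set of $f\in\mathbb F_q[X_1,\dots,X_n]_{\le d}$ with $\deg_{X_s}f<d_s-\delta+1$, together with $0$, and $\mathcal D^{(\delta,s)}_{\mathcal X}(d)=\Psi(\mathcal P^{(\delta,s)}_d)$. $W^{(1)}(C)$ is the minimum Hamming distance of a linear code $C$. Empty products equal $1$. *)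

From HB Require Import structures.
From mathcomp Require Import all_boot all_order all_algebra.
From mathcomp Require Import mpoly.
Set Implicit Arguments. Unset Strict Implicit. Unset Printing Implicit Defensive.
Import Order.TTheory GRing.Theory.
Local Open Scope ring_scope.

Definition is_subfield (F : fieldType) (S : {pred F}) : Prop :=
  [/\ 1 \in S,
      (forall x y, x \in S -> y \in S -> x - y \in S),
      (forall x y, x \in S -> y \in S -> x * y \in S) &
      (forall x, x \in S -> x != 0 -> x^-1 \in S)].

(* X = K_0 x ... x K_{n-1}  (0-based indices) *)
Definition gridX (F : finFieldType) (n : nat) (K : nat -> {set F})
  : {set {ffun 'I_n -> F}} :=
  [set x : {ffun 'I_n -> F} | [forall i : 'I_n, x i \in K i]].

(* total degree and degree in X_s of a multivariate polynomial (0 for p = 0) *)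
Definition totdeg (F : fieldType) (n : nat) (p : {mpoly F[n]}) : nat :=
  \max_(m <- msupp p) mdeg m.
Definition degX (F : fieldType) (n : nat) (s : 'I_n) (p : {mpoly F[n]}) : nat :=
  \max_(m <- msupp p) m s.

(* P_d^{(delta,s)} : polys of degree <= d with deg_{X_s} < d_s - delta + 1 = r,
   together with 0 *)
Definition Pspace (F : fieldType) (n : nat) (d : nat) (s : 'I_n) (r : nat)
  : {pred {mpoly F[n]}} :=
  [pred p | (p == 0) || ((totdeg p <= d)%N && (degX s p < r)%N)].

Definition Psi (F : finFieldType) (n : nat) (X : {set {ffun 'I_n -> F}})
  (p : {mpoly F[n]}) : 'rV[F]_#|X| :=
  \row_(j < #|X|) p.@[enum_val j].

Definition Dcode (F : finFieldType) (n : nat) (X : {set {ffun 'I_n -> F}})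
  (P : {pred {mpoly F[n]}}) (c : 'rV[F]_#|X|) : Prop :=
  exists2 p, p \in P & c = Psi X p.

Definition hwt (F : fieldType) (m : nat) (c : 'rV[F]_m) : nat :=
  #|[set j : 'I_m | c 0 j != 0]|.

(* W^(1)(C) = w : w is the minimum Hamming weight of a nonzero codeword of C
   (the minimum distance of the linear code C) *)
Definition W1_is (F : fieldType) (m : nat) (C : 'rV[F]_m -> Prop) (w : nat)
  : Prop :=
  ((exists c, [/\ C c, c != 0 & hwt c = w]) /\
   (forall c, C c -> c != 0 -> (w <= hwt c)%N))%type.

Arguments Psi {F n} X p.
Arguments Dcode {F n} X P c.
Arguments W1_is {F m} C w.

From HB Require Import structures.
From mathcomp Require Import all_boot all_order all_algebra.
From mathcomp Require Import mpoly zify.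
Import Order.TTheory GRing.Theory Num.Theory.

(* On the grid K_1 x ... x K_n a codeword does not change when every exponent e of X_i is
   reduced below d_i = |K_i| (x ^ d_i = x on K_i); this keeps the degree bounds, including
   deg_{X_s} < r.  By the footprint bound a nonzero polynomial p is nonzero at no fewer than
   prod_i (|A_i| - m_i) points of a grid A_1 x ... x A_n, for some monomial X^m of p.  For
   reduced exponents 0 <= m_i < d_i with sum m_i <= d and m_s < r, a greedy exchange argument
   over the increasing d_i shows that this product is at least the claimed weight.  The
   weight is attained by a product of linear factors vanishing on a box with r - 1 roots in
   X_s, d_i - 1 roots in X_i for the other i <= k, and one root in X_(k+1). *)

Set Implicit Arguments.
Unset Strict Implicit.
Unset Printing Implicit Defensive.

Local Open Scope ring_scope.

Local Notation widen := (widen_ord (leqnSn _)).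

Section Snoc.
Variable n : nat.

Definition mnm_snoc (m : 'X_{1..n}) (j : nat) : 'X_{1..n.+1} :=
  [multinom of rcons m j].

Definition mnm_init (m : 'X_{1..n.+1}) : 'X_{1..n} :=
  [multinom m (widen i) | i < n].

Lemma mnm_snoc_widen m j i : mnm_snoc m j (widen i) = m i.
Proof.
case: m => m; rewrite !(mnm_nth 0%N) nth_rcons.
by rewrite size_tuple /=; case: i => i /= ->.
Qed.

Lemma mnm_snoc_max m j : mnm_snoc m j ord_max = j.
Proof.
by rewrite multinomE (tnth_nth 0%N) nth_rcons /= size_tuple ltnn eqxx.
Qed.

Lemma ord_widen_or_max (i : 'I_n.+1) : (exists j : 'I_n, i = widen j) \/ i = ord_max.
Proof.
have [lt_in|ge_in] := ltnP i n; first by left; exists (Ordinal lt_in); apply/val_inj.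
by right; apply/val_inj/eqP; rewrite /= eqn_leq ge_in -ltnS ltn_ord.
Qed.

Lemma eq_mnm_snoc (m : 'X_{1..n.+1}) m' j :
  (m == mnm_snoc m' j) = (j == m ord_max) && (mnm_init m == m').
Proof.
apply/eqP/andP => [->|[/eqP -> /eqP <-]].
  rewrite mnm_snoc_max eqxx; split => //.
  by apply/eqP/mnmP => i; rewrite mnmE mnm_snoc_widen.
apply/mnmP => i; have [[i' ->]| ->] := ord_widen_or_max i.
  by rewrite mnm_snoc_widen mnmE.
by rewrite mnm_snoc_max.
Qed.

Definition ffun_snoc (T : Type) (x : {ffun 'I_n -> T}) (t : T) : {ffun 'I_n.+1 -> T} :=
  [ffun i => oapp x t (insub (val i))].

Lemma ffun_snoc_widen T x (t : T) i : ffun_snoc x t (widen i) = x i.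
Proof. by rewrite ffunE /= valK. Qed.

Lemma ffun_snoc_max T x (t : T) : ffun_snoc x t ord_max = t.
Proof. by rewrite ffunE /= insubF //= ltnn. Qed.

Lemma ffun_snoc_inj T x (t : T) y u : ffun_snoc x t = ffun_snoc y u -> x = y /\ t = u.
Proof.
move=> e; split; last by rewrite -(ffun_snoc_max x t) -(ffun_snoc_max y u) e.
by apply/ffunP => i; rewrite -(ffun_snoc_widen x t) -(ffun_snoc_widen y u) e.
Qed.

Variable R : comNzRingType.

Lemma mcoeff_muni (p : {mpoly R[n.+1]}) j m : ((muni p)`_j)@_m = p@_(mnm_snoc m j).
Proof.
rewrite muniE coef_sum raddf_sum /=.
rewrite [in RHS](mpolyE p) raddf_sum /=.
apply: eq_bigr => m' _; rewrite coefZ coefXn mcoeffZ mcoeffX eq_mnm_snoc eq_sym.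
case: (m' ord_max == j); last by rewrite mulr0 mcoeff0 mulr0.
by rewrite mulr1 mcoeffZ mcoeffX.
Qed.

Lemma muni_eq0 (p : {mpoly R[n.+1]}) : (muni p == 0) = (p == 0).
Proof.
apply/eqP/eqP => [p0|->]; last exact: muni0.
apply/mpolyP => m; rewrite mcoeff0.
have <- : mnm_snoc (mnm_init m) (m ord_max) = m by apply/eqP; rewrite eq_sym eq_mnm_snoc !eqxx.
by rewrite -mcoeff_muni p0 coef0 mcoeff0.
Qed.

Lemma meval_snoc (p : {mpoly R[n.+1]}) x t :
  p.@[ffun_snoc x t] = (map_poly (meval x) (muni p)).[t].
Proof.
rewrite muniE mevalE raddf_sum /= horner_sum; apply: eq_bigr => m _.
rewrite -mul_polyC rmorphM /= hornerM map_polyC hornerC map_polyXn hornerXn.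
rewrite -[X in _ = X * _]/(meval x _) mevalZ mevalX big_ord_recr /= ffun_snoc_max mulrA.
by congr (_ * _ * _); apply: eq_bigr => i _; rewrite ffun_snoc_widen mnmE.
Qed.

End Snoc.

Section Footprint.
Variable F : finFieldType.

Definition grid n (A : 'I_n -> {set F}) : {set {ffun 'I_n -> F}} :=
  [set x : {ffun 'I_n -> F} | [forall i, x i \in A i]].

Definition grid_nonzeros n (A : 'I_n -> {set F}) (p : {mpoly F[n]}) :=
  [set x in grid A | p.@[x] != 0].

Lemma ffun_snoc_grid n (A : 'I_n.+1 -> {set F}) x t :
  (ffun_snoc x t \in grid A) = (x \in grid (fun i => A (widen i))) && (t \in A ord_max).
Proof.
rewrite !inE; apply/forallP/andP => [xtA | [/forallP xA tA] i].
  split; last by rewrite -(ffun_snoc_max x t).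
  by apply/forallP => i; rewrite -(ffun_snoc_widen x t).
by have [[j ->]| ->] := ord_widen_or_max i; rewrite ?ffun_snoc_widen ?ffun_snoc_max.
Qed.

Lemma card_nonroots_ge (S : {set F}) (u : {poly F}) : u != 0 ->
  (#|S| - (size u).-1 <= #|[set t in S | u.[t] != 0%R]|)%N.
Proof.
move=> u0; rewrite leq_subLR -(cardsID [set t | root u t] S).
have -> : S :\: [set t | root u t] = [set t in S | u.[t] != 0].
  by apply/setP => t; rewrite !inE rootE andbC.
rewrite leq_add2r -ltnS prednK ?size_poly_gt0 // cardE.
apply: max_poly_roots u0 _ (enum_uniq _).
by apply/allP => t; rewrite mem_enum !inE => /andP[].
Qed.

Definition fibre_nonzeros n (A : 'I_n.+1 -> {set F}) (p : {mpoly F[n.+1]}) x : {set F} :=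
  [set t in A ord_max | (map_poly (meval x) (muni p)).[t] != 0].

Lemma sum_card_fibre_nonzeros n (A : 'I_n.+1 -> {set F}) (p : {mpoly F[n.+1]})
    (G : {set {ffun 'I_n -> F}}) :
  G \subset grid (fun i => A (widen i)) ->
  (\sum_(x in G) #|fibre_nonzeros A p x| <= #|grid_nonzeros A p|)%N.
Proof.
move=> /subsetP GA.
pose pairs := [set xt | (xt.1 \in G) && (xt.2 \in fibre_nonzeros A p xt.1)].
have -> : (\sum_(x in G) #|fibre_nonzeros A p x| = #|pairs|)%N.
  under eq_bigr do rewrite -sum1_card.
  by rewrite pair_big_dep /= -sum1_card; apply: eq_bigl => -[x t]; rewrite /pairs inE.
rewrite -(card_imset _ (f := fun xt => ffun_snoc xt.1 xt.2)); last first.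
  by move=> [x t] [y u] /= /(@ffun_snoc_inj n F) [-> ->].
apply/subset_leq_card/subsetP => y /imsetP [[x t]].
rewrite inE /= => /andP[xG]; rewrite inE => /andP[tA pxt] ->.
rewrite -meval_snoc in pxt.
by rewrite inE ffun_snoc_grid tA GA.
Qed.

Lemma footprint_bound n (A : 'I_n -> {set F}) (p : {mpoly F[n]}) : p != 0 ->
  exists2 m, m \in msupp p & (\prod_(i < n) (#|A i| - m i) <= #|grid_nonzeros A p|)%N.
Proof.
elim: n A p => [|n IH] A p p0.
  have c0 : p@_0%MM != 0 by apply: contra p0 => /eqP c0; rewrite (nvar0_mpolyC p) c0.
  exists 0%MM; first by rewrite mcoeff_msupp.
  rewrite big_ord0 card_gt0; apply/set0Pn; exists [ffun i => 0].
  by rewrite !inE (nvar0_mpolyC p) mevalC c0 andbT; apply/forallP => -[].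
(* Apply induction to the leading coefficient g of p viewed in the last variable. *)
set q := muni p; set J := (size q).-1; set g := q`_J.
have g0 : g != 0 by rewrite /g /J -lead_coefE lead_coef_eq0 muni_eq0.
have [m' m'_g foot_g] := IH (fun i => A (widen i)) g g0.
exists (mnm_snoc m' J); first by rewrite mcoeff_msupp -mcoeff_muni -mcoeff_msupp.
rewrite big_ord_recr /= mnm_snoc_max.
under eq_bigr do rewrite mnm_snoc_widen.
have fibre_ge x : x \in grid_nonzeros (fun i => A (widen i)) g ->
    (#|A ord_max| - J <= #|fibre_nonzeros A p x|)%N.
  rewrite inE => /andP[_ gx].
  have size_qx : size (map_poly (meval x) q) = J.+1.
    rewrite size_map_poly_id0; first by rewrite /J prednK // size_poly_gt0 muni_eq0.
    by rewrite lead_coefE.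
  have qx0 : map_poly (meval x) q != 0 by rewrite -size_poly_eq0 size_qx.
  by have := card_nonroots_ge (A ord_max) qx0; rewrite size_qx.
have sub : grid_nonzeros (fun i => A (widen i)) g \subset grid (fun i => A (widen i)).
  by apply/subsetP => x /setIdP[].
apply: leq_trans (sum_card_fibre_nonzeros p sub).
apply: (@leq_trans (\sum_(x in grid_nonzeros (fun i => A (widen i)) g) (#|A ord_max| - J))).
  by rewrite sum_nat_const leq_mul2r foot_g orbT.
by apply: leq_sum => x /fibre_ge.
Qed.

End Footprint.

Section SubfieldExponents.
Variables (F : finFieldType) (K : {set F}).
Hypothesis subK : is_subfield (mem K).

Lemma subfield0 : 0 \in K.
Proof. by case: subK => K1 KB _ _; rewrite -(subrr 1) KB. Qed.

Lemma card_subfield_ge2 : (2 <= #|K|)%N.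
Proof.
rewrite (cardsD1 0) subfield0 ltnS card_gt0; apply/set0Pn; exists 1.
by case: subK => K1 _ _ _; rewrite !inE oner_eq0.
Qed.

Lemma subfield_expr_card_sub1 x : x \in K -> x != 0 -> x ^+ (#|K| - 1) = 1.
Proof.
move=> xK x0; have [_ _ KM _] := subK.
set K' := K :\ 0.
have mulxK' : [set x * y | y in K'] = K'.
  apply/eqP; rewrite eqEcard card_imset ?leqnn ?andbT; last exact: mulfI.
  apply/subsetP => z /imsetP [y]; rewrite !inE => /andP[y0 yK] ->.
  by rewrite mulf_neq0 // KM.
have prodK'_neq0 : \prod_(y in K') y != 0 by apply/prodf_neq0 => y; rewrite !inE => /andP[].
have : \prod_(y in K') y = \prod_(y in K') (x * y).
  by rewrite -{1}mulxK' big_imset //; apply: in2W; apply: mulfI.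
have -> : #|K| = #|K'|.+1 by rewrite [#|K|](cardsD1 0) subfield0.
by rewrite subn1 big_split /= prodr_const -{1}[\prod_(y in K') y]mul1r => /mulIf ->.
Qed.

(* Positive exponents stay positive, so that 0 ^+ e is preserved too. *)
Definition reduce_exp (d e : nat) : nat := if (e < d)%N then e else (e.-1 %% d.-1).+1.

Lemma expr_reduce_exp x e : x \in K -> x ^+ e = x ^+ reduce_exp #|K| e.
Proof.
move=> xK; rewrite /reduce_exp; have [//|le_K_e] := ltnP e #|K|.
have e0 : (0 < e)%N by apply: leq_trans le_K_e; apply: ltnW card_subfield_ge2.
have [->|x0] := eqVneq x 0; first by rewrite !expr0n eqn0Ngt e0.
rewrite -{1}(prednK e0) !exprS {1}(divn_eq e.-1 #|K|.-1) exprD mulnC exprM.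
by rewrite -subn1 subfield_expr_card_sub1 // expr1n mul1r.
Qed.

End SubfieldExponents.

Lemma reduce_exp_le d e : (0 < d)%N -> (reduce_exp d e <= e)%N.
Proof.
rewrite /reduce_exp; have [//|le_d_e] := ltnP e d; move=> d0.
by case: e le_d_e => [|e] le_d_e; [case: d d0 le_d_e | rewrite ltnS leq_mod].
Qed.

Lemma reduce_exp_lt d e : (2 <= d)%N -> (reduce_exp d e < d)%N.
Proof.
rewrite /reduce_exp; have [//|_] := ltnP e d.
by case: d => [|[|d]] //= _; rewrite ltnS ltn_mod.
Qed.

Section ReduceMpoly.
Variables (R : comNzRingType) (n : nat) (d : 'I_n -> nat).

Definition reduce_mnm (m : 'X_{1..n}) : 'X_{1..n} := [multinom reduce_exp (d i) (m i) | i < n].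

Definition reduce_mpoly (p : {mpoly R[n]}) : {mpoly R[n]} :=
  \sum_(m <- msupp p) p@_m *: 'X_[reduce_mnm m].

Lemma meval_reduce_mpoly (p : {mpoly R[n]}) (x : 'I_n -> R) :
  (forall i e, x i ^+ e = x i ^+ reduce_exp (d i) e) -> (reduce_mpoly p).@[x] = p.@[x].
Proof.
move=> xE; rewrite [RHS]mevalE raddf_sum /=; apply: eq_bigr => m _.
rewrite -[LHS]/(meval x _) mevalZ mevalX; congr (_ * _).
by apply: eq_bigr => i _; rewrite mnmE -xE.
Qed.

Lemma msupp_reduce_mpoly (p : {mpoly R[n]}) m' : m' \in msupp (reduce_mpoly p) ->
  exists2 m, m \in msupp p & m' = reduce_mnm m.
Proof.
move/msupp_sum_le/flattenP => [_ /mapP [m mp ->] m'_in].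
exists m; first by move: mp; rewrite mem_filter.
by move/msuppZ_le: m'_in; rewrite msuppX inE => /eqP.
Qed.

End ReduceMpoly.

Lemma card_grid (F : finFieldType) n (A : 'I_n -> {set F}) : #|grid A| = (\prod_(i < n) #|A i|)%N.
Proof. by rewrite -cardsXn; congr #|pred_of_set _|; apply/setP => x; rewrite !inE in_setXn. Qed.

Lemma msupp_prod_mnm_le (R : comNzRingType) n (I : Type) (r : seq I) (P : pred I)
    (G : I -> {mpoly R[n]}) (bound : I -> 'I_n -> nat) :
  (forall j, P j -> forall m, m \in msupp (G j) -> forall t, (m t <= bound j t)%N) ->
  forall m, m \in msupp (\prod_(j <- r | P j) G j) ->
  forall t, (m t <= \sum_(j <- r | P j) bound j t)%N.
Proof.
move=> Gb; elim: r => [|j r IH] m.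
  by rewrite !big_nil -mpolyC1 msupp1 inE => /eqP -> t; rewrite mnm0E.
rewrite big_cons; case: ifP => Pj mP t; rewrite big_cons Pj; last exact: IH.
move/msuppM_le/allpairsP: mP => [[m1 m2] [/= m1G m2r ->]].
by rewrite mnmDE leq_add ?Gb ?IH.
Qed.

Section BoxMpoly.
Variables (F : finFieldType) (n : nat) (B : 'I_n -> {set F}) (a : 'I_n -> nat).
Hypothesis a_le : forall i, (a i <= #|B i|)%N.

Definition box_roots i : {set F} := [set x in take (a i) (enum (B i))].

Definition box_mpoly : {mpoly F[n]} := \prod_(i < n) \prod_(c in box_roots i) ('X_i - c%:MP).

Lemma card_box_roots i : #|box_roots i| = a i.
Proof.
rewrite cardsE; move/card_uniqP: (take_uniq (a i) (enum_uniq (mem (B i)))) => ->.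
by rewrite size_takel // -cardE.
Qed.

Lemma box_roots_sub i : box_roots i \subset B i.
Proof. by apply/subsetP => x; rewrite inE => /mem_take; rewrite mem_enum. Qed.

Lemma meval_box_mpoly (x : 'I_n -> F) :
  box_mpoly.@[x] = \prod_(i < n) \prod_(c in box_roots i) (x i - c).
Proof.
rewrite rmorph_prod; apply: eq_bigr => i _; rewrite rmorph_prod; apply: eq_bigr => c _.
by rewrite -[LHS]/(meval x ('X_i - c%:MP)) mevalB mevalXU mevalC.
Qed.

Lemma grid_nonzeros_box_mpoly : grid_nonzeros B box_mpoly = grid (fun i => B i :\: box_roots i).
Proof.
apply/setP => x; rewrite !inE meval_box_mpoly prodf_seq_neq0.
apply/andP/forallP => [[/forallP xB /allP nz] i | xBC].
  have := nz i (mem_index_enum _); rewrite prodf_seq_neq0 => /allP nzi.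
  rewrite in_setD xB andbT; apply/negP => xr.
  by have := nzi (x i) (mem_index_enum _); rewrite xr subrr eqxx.
split; first by apply/forallP => i; have := xBC i; rewrite !inE => /andP[].
apply/allP => i _; rewrite prodf_seq_neq0; apply/allP => c _; apply/implyP => cr.
by rewrite subr_eq0; apply: contraTneq (xBC i) => ->; rewrite in_setD cr.
Qed.

Lemma card_grid_nonzeros_box_mpoly :
  #|grid_nonzeros B box_mpoly| = (\prod_(i < n) (#|B i| - a i))%N.
Proof.
rewrite grid_nonzeros_box_mpoly card_grid; apply: eq_bigr => i _.
by rewrite cardsD (setIidPr (box_roots_sub i)) card_box_roots.
Qed.

Lemma msupp_box_mpoly m : m \in msupp box_mpoly -> forall t, (m t <= a t)%N.
Proof.
move=> mP t.
have factor_le i : xpredT i -> forall m', m' \in msupp (\prod_(c in box_roots i) ('X_i - c%:MP)) ->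
    forall t', (m' t' <= \sum_(c in box_roots i) (i == t'))%N.
  move=> _; apply: msupp_prod_mnm_le => c _ m'.
  move/msuppB_le; rewrite mem_cat msuppX msuppC => /orP[|].
    by rewrite inE => /eqP -> t'; rewrite mnm1E.
  by case: (c == 0); rewrite ?inE // => /eqP -> t'; rewrite mnm0E.
apply: leq_trans (msupp_prod_mnm_le factor_le mP t) _.
rewrite (bigD1 t) //= eqxx sum_nat_const card_box_roots muln1 big1 ?addn0 //.
by move=> i ne_it; apply: big1 => c _; rewrite (negbTE ne_it).
Qed.

End BoxMpoly.

Section ProductBounds.
Local Open Scope nat_scope.
Variables d b : nat -> nat.

Lemma leq_mul_prod_deficit (r : seq nat) a :
  {in r, forall i, b i <= d i /\ a <= d i} ->
  (a - \sum_(i <- r) (d i - b i)) * \prod_(i <- r) d i <= a * \prod_(i <- r) b i.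
Proof.
elim: r a => [|i r IH] a bd; first by rewrite !big_nil subn0.
have [bi_le a_le] := bd i (mem_head _ _).
rewrite !big_cons subnDA; set a' := a - (d i - b i).
have key : d i * a' <= a * b i by rewrite /a'; nia.
have IH' : (a' - \sum_(j <- r) (d j - b j)) * \prod_(j <- r) d j <= a' * \prod_(j <- r) b j.
  apply: IH => j jr; have [-> aj] := bd j (@mem_behead _ (i :: r) _ jr); split=> //.
  exact: leq_trans (leq_subr _ _) aj.
rewrite mulnCA (leq_trans (leq_mul (leqnn (d i)) IH')) // mulnA mulnA.
by rewrite leq_mul2r key orbT.
Qed.

Lemma sorted_head_min j r : sorted (relpre d leq) (j :: r) -> {in r, forall i, d j <= d i}.
Proof. by move/(order_path_min (relpre_trans leq_trans))/allP. Qed.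

Lemma leq_prod_sorted j r e :
  {in j :: r, forall i, b i <= d i} -> sorted (relpre d leq) (j :: r) ->
  \sum_(i <- j :: r) (d i - b i) <= e ->
  (d j - e) * \prod_(i <- r) d i <= \prod_(i <- j :: r) b i.
Proof.
move=> bd srt; rewrite !big_cons => le_e; have bj_le := bd j (mem_head _ _).
have bd_r : {in r, forall i, b i <= d i /\ b j <= d i}.
  move=> i ir; split; first exact/bd/mem_behead.
  exact: leq_trans bj_le (sorted_head_min srt ir).
apply: leq_trans (leq_mul_prod_deficit bd_r).
by rewrite leq_mul2r; apply/orP; right; move: le_e; set S := \sum_(_ <- r) _; lia.
Qed.

Lemma leq_prod_deficit_budget r1 r2 j e :
  {in r1, forall i, 0 < b i <= d i /\ d i <= d j} ->
  {in j :: r2, forall i, 0 < b i <= d i} ->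
  sorted (relpre d leq) (j :: r2) -> e < d j ->
  \sum_(i <- r1 ++ j :: r2) (d i - b i) <= \sum_(i <- r1) (d i - 1) + e ->
  (d j - e) * \prod_(i <- r2) d i <= \prod_(i <- r1 ++ j :: r2) b i.
Proof.
have [N] := ubnP (size r1 + size r2).
elim: N r1 r2 j e => // N IH [|i0 r1] r2 j e ltN br1 br2 srt lt_e_dj.
  by rewrite big_nil add0n => /(leq_prod_sorted _ srt)-> // i /br2 /andP[].
have [/andP[bi0_gt0 bi0_le] di0_le] := br1 i0 (mem_head _ _).
have {}br1 : {in r1, forall i, 0 < b i <= d i /\ d i <= d j}.
  by move=> i ir; apply: br1; rewrite inE ir orbT.
have {}ltN : size r1 + size r2 < N := leq_trans (ltnSn _) ltN.
rewrite /= !big_cons; set S1 := \sum_(i <- r1) _; set w := b i0 - 1 => budget.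
(* Either the slack w of i0 still fits below d j, or j is saturated: it then joins r1 and
   the excess budget is passed on to the head of r2. *)
have [lt_ew_dj|le_dj_ew] := ltnP (e + w) (d j).
  apply: leq_trans (leq_mul (leqnn (b i0)) (IH _ _ _ (e + w) ltN br1 br2 srt lt_ew_dj _)).
    by rewrite mulnA leq_mul2r; apply/orP; right; rewrite /w in lt_ew_dj *; nia.
  by move: budget; set S := \sum_(i <- r1 ++ _) _; rewrite /w; lia.
case: r2 br2 srt ltN budget => [|j1 r2] br2 srt ltN budget.
  have prod_gt0 : 0 < \prod_(i <- r1 ++ [:: j]) b i.
    by rewrite big_seq prodn_cond_gt0 // => i; rewrite mem_cat => /orP[/br1[]|/br2] /andP[].
  rewrite big_nil muln1; apply: leq_trans (leq_pmulr _ prod_gt0).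
  by rewrite /w in le_dj_ew; lia.
have dj_le : d j <= d j1 := sorted_head_min srt (mem_head _ _).
set e' := e + w + 1 - d j.
have br1j : {in rcons r1 j, forall i, 0 < b i <= d i /\ d i <= d j1}.
  move=> i; rewrite mem_rcons inE => /orP[/eqP ->|/br1 [-> /leq_trans ->]] //.
  by rewrite (br2 j (mem_head _ _)).
have br2' : {in j1 :: r2, forall i, 0 < b i <= d i} by move=> i ir; apply: br2; rewrite inE ir orbT.
have lt_e'_dj1 : e' < d j1 by rewrite /e' /w; lia.
have IHj1 := IH (rcons r1 j) r2 j1 e' _ br1j br2' (path_sorted srt) lt_e'_dj1.
have sum_rcons : \sum_(i <- rcons r1 j) (d i - 1) = S1 + (d j - 1).
  by rewrite -cats1 big_cat big_seq1.
rewrite cat_rcons size_rcons sum_rcons in IHj1.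
rewrite big_cons; apply: leq_trans (leq_mul (leqnn (b i0)) (IHj1 _ _)); first last.
- by move: budget le_dj_ew; set S := \sum_(i <- r1 ++ _) _; rewrite /e' /w; lia.
- by move: ltN => /=; lia.
rewrite !mulnA leq_mul2r; apply/orP; right; rewrite /e'.
by rewrite /w in le_dj_ew *; nia.
Qed.

End ProductBounds.

Section ExponentBudget.
Local Open Scope nat_scope.
Variables (d : nat -> nat) (n k s ell r : nat).
Hypotheses (d_ge2 : forall i, i < n -> 2 <= d i) (lt_r_ds : r < d s).

Definition weight_bound : nat :=
  if n == k.+1 then d k - ell + 1
  else (d k - ell + 1) * (d k.+1 - 1) * \prod_(k.+2 <= i < n) d i.

Definition extremal_exp i : nat :=
  if i == s then r - 1 else if i <= k then d i - 1 else (i == k.+1 : nat).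

Lemma extremal_exp_le i : i < n -> extremal_exp i <= d i.
Proof.
move=> /d_ge2 d2; rewrite /extremal_exp; case: eqP => [->|_].
  exact: leq_trans (leq_subr _ _) (ltnW lt_r_ds).
by case: ifP => _; [apply: leq_subr | case: (i == k.+1) => //; apply: ltnW].
Qed.

Hypothesis lt_kn : k < n.

Lemma weight_bound_gt0 : 0 < weight_bound.
Proof.
rewrite /weight_bound; case: eqP => [_|/eqP ne_nk1]; first by rewrite addn1.
have lt_k1n : k.+1 < n by rewrite ltn_neqAle eq_sym ne_nk1.
rewrite !muln_gt0 addn1 subn_gt0 d_ge2 //= big_seq prodn_cond_gt0 // => i.
by rewrite mem_index_iota => /andP[_ /d_ge2]; apply: leq_trans.
Qed.

Hypotheses (le_sk : s <= k) (ell_ds : ell + d s = d k + r).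

Let others := [seq i <- iota 0 k.+1 | i != s].

Let mem_others i : (i \in others) = (i != s) && (i <= k).
Proof. by rewrite mem_filter mem_iota ltnS. Qed.

Let perm_iota_s : perm_eq (iota 0 k.+1) (s :: others).
Proof.
have s_in : s \in iota 0 k.+1 by rewrite mem_iota.
by apply: perm_trans (perm_to_rem s_in) _; rewrite rem_filter ?iota_uniq.
Qed.

Let tail := iota k.+1 (n - k.+1).

Let perm_iota_n : perm_eq (iota 0 n) (s :: others ++ tail).
Proof.
have -> : iota 0 n = iota 0 k.+1 ++ tail by rewrite /tail -iotaD subnKC.
by rewrite -cat_cons perm_cat2r.
Qed.

Let sum_others (G : nat -> nat) :
  G s + \sum_(i <- others) G i = \sum_(i <- iota 0 k) G i + G k.
Proof.
transitivity (\sum_(i <- iota 0 k.+1) G i); first by rewrite (perm_big _ perm_iota_s) big_cons.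
by rewrite -addn1 iotaD big_cat big_seq1.
Qed.

Let tail_cons : k.+1 < n -> tail = k.+1 :: iota k.+2 (n - k.+2).
Proof. by move=> lt_k1n; rewrite /tail -[n - k.+1]prednK ?subn_gt0 // -subnS. Qed.

Let mem_tail i : (i \in tail) = (k < i < n).
Proof. by rewrite mem_iota subnKC. Qed.

Let others_lt_n i : i \in others -> i < n.
Proof. by rewrite mem_others => /andP[_ /leq_ltn_trans->]. Qed.

Let extremal_exp_others i : i \in others -> extremal_exp i = d i - 1.
Proof. by rewrite mem_others /extremal_exp => /andP[/negbTE -> ->]. Qed.

Let extremal_exp_gt i : k < i -> extremal_exp i = (i == k.+1).
Proof.
rewrite /extremal_exp => lt_ki; rewrite ifF; first by rewrite leqNgt lt_ki.
by apply: contraTF lt_ki => /eqP ->; rewrite -leqNgt.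
Qed.

Let extremal_exp_gt1 i : k.+1 < i -> extremal_exp i = 0.
Proof. by move=> lt_k1i; rewrite extremal_exp_gt ?gtn_eqF // ltnW. Qed.

Hypothesis r_gt0 : 0 < r.

Lemma prod_extremal_exp : \prod_(i <- iota 0 n) (d i - extremal_exp i) = weight_bound.
Proof.
rewrite (perm_big _ perm_iota_n) big_cons big_cat /=.
have -> : d s - extremal_exp s = d k - ell + 1 by rewrite /extremal_exp eqxx; lia.
rewrite big_seq big1 => [|i /[dup] /extremal_exp_others -> /others_lt_n /d_ge2]; last lia.
rewrite mul1n /weight_bound; case: eqP => [n_k1|/eqP ne_nk1].
  by rewrite /tail n_k1 subnn big_nil muln1.
have lt_k1n : k.+1 < n by rewrite ltn_neqAle eq_sym ne_nk1.
rewrite tail_cons // big_cons extremal_exp_gt // eqxx mulnA; congr (_ * _ * _).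
rewrite big_seq [RHS]big_seq; apply: eq_bigr => i; rewrite mem_iota => /andP[lt_k1i _].
by rewrite extremal_exp_gt1 ?subn0.
Qed.

Lemma sum_extremal_exp :
  \sum_(i <- iota 0 n) extremal_exp i <= \sum_(i <- iota 0 k) (d i - 1) + ell.
Proof.
rewrite (perm_big _ perm_iota_n) big_cons big_cat /=.
have -> : \sum_(i <- others) extremal_exp i = \sum_(i <- others) (d i - 1).
  by rewrite big_seq [RHS]big_seq; apply: eq_bigr => i /extremal_exp_others.
have sum_tail_le1 : \sum_(i <- tail) extremal_exp i <= 1.
  have [lt_k1n|] := ltnP k.+1 n; last by rewrite /tail -subn_eq0 => /eqP ->; rewrite big_nil.
  rewrite tail_cons // big_cons extremal_exp_gt // eqxx big_seq big1 // => i.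
  by rewrite mem_iota => /andP[/extremal_exp_gt1].
have := d_ge2 (leq_ltn_trans le_sk lt_kn); have := d_ge2 lt_kn.
have -> : extremal_exp s = r - 1 by rewrite /extremal_exp eqxx.
have := sum_others (fun i => d i - 1); move: sum_tail_le1.
set S := \sum_(_ <- others) _; set S0 := \sum_(_ <- iota 0 k) _; lia.
Qed.

Hypothesis d_mono : forall i j, i <= j < n -> d i <= d j.

Let sorted_tail : sorted (relpre d leq) tail.
Proof.
rewrite -sorted_map; apply: (homo_sorted_in (P := gtn n)) (iota_sorted _ _).
  by move=> i j /[!inE] lt_in lt_jn le_ij; apply: d_mono; rewrite le_ij.
by apply/allP => i; rewrite mem_tail => /andP[].
Qed.

Let tail_budget (A : nat -> nat) : A s < r ->
  \sum_(i <- iota 0 n) A i <= \sum_(i <- iota 0 k) (d i - 1) + ell ->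
  \sum_(i <- others ++ tail) A i <= \sum_(i <- others) (d i - 1) + (r - A s).
Proof.
rewrite (perm_big _ perm_iota_n) big_cons => lt_As_r.
have := d_ge2 (leq_ltn_trans le_sk lt_kn); have := d_ge2 lt_kn.
have /= := sum_others (fun i => d i - 1); set SA := \sum_(_ <- _ ++ _) _.
set S := \sum_(_ <- others) _; set S0 := \sum_(_ <- iota 0 k) _; lia.
Qed.

Lemma weight_bound_le_prod (A : nat -> nat) :
  (k.+1 < n -> d s < d k.+1) -> (forall i, i < n -> A i < d i) ->
  \sum_(i <- iota 0 n) A i <= \sum_(i <- iota 0 k) (d i - 1) + ell -> A s < r ->
  weight_bound <= \prod_(i <- iota 0 n) (d i - A i).
Proof.
move=> lt_ds_dk1 lt_A_d budget lt_As_r.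
have lt_As_ds := lt_A_d s (leq_ltn_trans le_sk lt_kn).
have b_ok i : i < n -> 0 < d i - A i <= d i.
  by move=> /lt_A_d lt_i; rewrite subn_gt0 lt_i leq_subr.
have lt_n_rest i : i \in others ++ tail -> i < n.
  by rewrite mem_cat mem_tail => /orP[/others_lt_n|/andP[]].
rewrite (perm_big _ perm_iota_n) big_cons /weight_bound; case: eqP => [n_k1|/eqP ne_nk1].
  have prod_gt0 : 0 < \prod_(i <- others ++ tail) (d i - A i).
    by rewrite big_seq prodn_cond_gt0 // => i /lt_n_rest /b_ok /andP[].
  by apply: leq_trans (leq_pmulr _ prod_gt0); lia.
have lt_k1n : k.+1 < n by rewrite ltn_neqAle eq_sym ne_nk1.
have lt_ds_dk1' := lt_ds_dk1 lt_k1n.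
have lower := @leq_prod_deficit_budget d (fun i => d i - A i) others (iota k.+2 (n - k.+2))
  k.+1 (r - A s).
rewrite -tail_cons // in lower.
have {}lower : (d k.+1 - (r - A s)) * \prod_(k.+2 <= i < n) d i
    <= \prod_(i <- others ++ tail) (d i - A i).
  apply: lower => //.
  - move=> i i_oth; split; first exact/b_ok/others_lt_n.
    by apply: d_mono; move: i_oth; rewrite lt_k1n andbT mem_others => /andP[_ /leqW].
  - by move=> i; rewrite mem_tail => /andP[_ /b_ok].
  - lia.
  - rewrite big_seq (eq_bigr A) -?big_seq ?tail_budget // => i /lt_n_rest /lt_A_d/ltnW.
    exact: subKn.
apply: leq_trans (leq_mul (leqnn _) lower); rewrite mulnA leq_mul2r; apply/orP; right.
(* x |-> (d s - x) (d k.+1 - r + x) is concave, so on [0, r - 1] it is minimal at an endpoint;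
   d s < d k.+1 makes it r - 1. *)
nia.
Qed.
End ExponentBudget.

Lemma big_ord_iota (R : Type) (idx : R) (op : R -> R -> R) n (G : nat -> R) :
  \big[op/idx]_(i < n) G i = \big[op/idx]_(i <- iota 0 n) G i.
Proof. by rewrite -(big_mkord xpredT) /index_iota subn0. Qed.

Definition ord_extend n (f : 'I_n -> nat) (i : nat) : nat :=
  if insub i is Some j then f j else 0.

Lemma ord_extendE n (f : 'I_n -> nat) (i : 'I_n) : ord_extend f i = f i.
Proof. by rewrite /ord_extend valK. Qed.

Lemma hwt_eq0 (F : fieldType) m (c : 'rV[F]_m) : (hwt c == 0)%N = (c == 0).
Proof.
rewrite cards_eq0; apply/eqP/eqP => [c0|->]; last by apply/setP => j; rewrite !inE mxE eqxx.
by apply/rowP => j; rewrite mxE; apply/eqP/negbFE; have := in_set0 j; rewrite -c0 inE.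
Qed.

Lemma hwt_Psi (F : finFieldType) n (X : {set {ffun 'I_n -> F}}) (p : {mpoly F[n]}) :
  hwt (Psi X p) = #|[set x in X | p.@[x] != 0]|.
Proof.
rewrite /hwt -(card_imset _ (@enum_val_inj _ (mem X))); apply: eq_card => x.
rewrite !inE; apply/imsetP/andP => [[j]|[xX nz]].
  by rewrite inE mxE => nz ->; rewrite enum_valP.
by exists (enum_rank_in xX x); rewrite ?inE ?mxE enum_rankK_in.
Qed.

Section EvaluationCode.
Variables (F : finFieldType) (n : nat) (K : nat -> {set F}) (s : 'I_n) (k ell r : nat).
Hypotheses (subK : forall i, (i < n)%N -> is_subfield (mem (K i)))
  (lt_r_ds : (r < #|K s|)%N) (lt_kn : (k < n)%N) (le_sk : (s <= k)%N)
  (ell_ds : (ell + #|K s| = #|K k| + r)%N) (r_gt0 : (0 < r)%N).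

Local Notation d := (fun i => #|K i|).
Local Notation Kn := (fun i : 'I_n => K i).
Local Notation code := (Dcode (gridX n K) (Pspace (\sum_(i < k) (#|K i| - 1) + ell)%N s r)).

Let d_ge2 i : (i < n)%N -> (2 <= d i)%N.
Proof. by move=> /subK; apply: card_subfield_ge2. Qed.

Let hwt_code p : hwt (Psi (gridX n K) p) = #|grid_nonzeros Kn p|.
Proof. exact: hwt_Psi. Qed.

Lemma extremal_codeword : exists c, [/\ code c, c != 0 & hwt c = weight_bound d n k ell].
Proof.
pose a (i : 'I_n) := extremal_exp d k s r i.
have a_le i : (a i <= #|K i|)%N by apply: (extremal_exp_le k d_ge2 lt_r_ds (ltn_ord i)).
have hwt_box : hwt (Psi (gridX n K) (box_mpoly Kn a)) = weight_bound d n k ell.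
  rewrite hwt_code (card_grid_nonzeros_box_mpoly a_le).
  rewrite (@big_ord_iota _ _ _ _ (fun i => d i - extremal_exp d k s r i)%N).
  exact: (prod_extremal_exp d_ge2 lt_r_ds lt_kn le_sk ell_ds r_gt0).
exists (Psi (gridX n K) (box_mpoly Kn a)); split => //; last first.
  by rewrite -hwt_eq0 hwt_box -lt0n (weight_bound_gt0 ell d_ge2 lt_kn).
exists (box_mpoly Kn a) => //; rewrite inE; apply/orP; right; apply/andP; split.
  apply/bigmax_leqP_seq => m /(msupp_box_mpoly a_le) m_le _; rewrite mdegE.
  rewrite (@big_ord_iota _ _ _ k (fun i => #|K i| - 1)%N).
  apply: leq_trans (sum_extremal_exp d_ge2 lt_r_ds lt_kn le_sk ell_ds r_gt0).
  by rewrite -(@big_ord_iota _ _ _ n (extremal_exp d k s r)); apply: leq_sum => i _; apply: m_le.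
rewrite /degX -(prednK r_gt0) ltnS; apply/bigmax_leqP_seq => m /(msupp_box_mpoly a_le) m_le _.
by rewrite (leq_trans (m_le s)) // /a /extremal_exp eqxx subn1.
Qed.

Hypotheses (d_mono : forall i j, (i <= j < n)%N -> (#|K i| <= #|K j|)%N)
  (lt_ds_dk1 : (k.+1 < n)%N -> (#|K s| < #|K k.+1|)%N).

Lemma weight_bound_le_hwt c : code c -> c != 0 -> (weight_bound d n k ell <= hwt c)%N.
Proof.
move=> [p Pp ->]; rewrite -hwt_eq0 hwt_code => hwt_p.
pose q := reduce_mpoly (fun i : 'I_n => #|K i|) p.
have Kn_q : grid_nonzeros Kn q = grid_nonzeros Kn p.
  apply/setP => x; rewrite !inE; case: (boolP [forall i, _]) => //= /forallP xK.
  congr (~~ (_ == _)); apply: meval_reduce_mpoly => i e.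
  by apply: expr_reduce_exp; [apply: subK | apply: xK].
have q0 : q != 0.
  apply: contraNneq hwt_p => q0; apply/eqP/eq_card0 => x.
  by rewrite -Kn_q !inE q0 meval0 eqxx andbF.
have p0 : p != 0 by apply: contraNneq q0 => p0; rewrite /q p0 /reduce_mpoly msupp0 big_nil.
move: Pp; rewrite inE (negbTE p0) /= => /andP[deg_p degs_p].
have [_ /msupp_reduce_mpoly [m mp ->] foot] := footprint_bound Kn q0.
rewrite -Kn_q; apply: leq_trans foot.
pose A := ord_extend (fun i => reduce_exp #|K i| (m i)).
have A_le (i : 'I_n) : (A i <= m i)%N by rewrite /A ord_extendE reduce_exp_le // ltnW // d_ge2.
rewrite (eq_bigr (fun i : 'I_n => #|K i| - A i)%N) => [|i _]; last by rewrite /A ord_extendE mnmE.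
rewrite (@big_ord_iota _ _ _ n (fun i => #|K i| - A i)%N).
apply: (weight_bound_le_prod d_ge2 lt_r_ds lt_kn le_sk ell_ds r_gt0 d_mono lt_ds_dk1).
- move=> i lt_in; rewrite /A /ord_extend insubT /=.
  exact/reduce_exp_lt/d_ge2.
- rewrite -(@big_ord_iota _ _ _ n A) -(@big_ord_iota _ _ _ k (fun i => #|K i| - 1)%N).
  apply: leq_trans deg_p; apply: (@leq_trans (mdeg m)); last exact: leq_bigmax_seq.
  by rewrite mdegE; apply: leq_sum => i _; apply: A_le.
- apply: leq_ltn_trans (A_le s) _; apply: leq_ltn_trans degs_p.
  exact: leq_bigmax_seq.
Qed.
End EvaluationCode.

Theorem mainTheorem11 (F : finFieldType) (n : nat) (K : nat -> {set F})
  (delta : nat) (s : 'I_n) (k ell : nat) :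
  (2 <= n)%N ->
  (forall i, (i < n)%N -> is_subfield (mem (K i))) ->
  (forall i j, (i <= j < n)%N -> K i \subset K j) ->
  (2 <= delta)%N ->
  (1 <= #|K s| - delta + 1)%N ->
  (k < n)%N -> (0 < ell)%N -> (ell <= #|K k| - 1)%N ->
  (n = k.+1 \/ 3 <= #|K 0%N|)%N ->
  ~ ((k + 2 <= n)%N /\ (#|K k.+1| <= #|K s|)%N) ->
  ~ ((#|K s| <= #|K k|)%N /\
     (0 <= #|K s|%:Z - (#|K k|%:Z - ell%:Z) < (#|K s| - delta + 1)%N%:Z)%R) ->
  (#|K s|%:Z - (#|K k|%:Z - ell%:Z) = (#|K s| - delta + 1)%N%:Z)%R ->
  W1_is
    (Dcode (gridX n K)
       (Pspace ((\sum_(i < k) (#|K i| - 1)) + ell)%N s (#|K s| - delta + 1)%N))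
    (if n == k.+1 then (#|K k| - ell + 1)%N
     else ((#|K k| - ell + 1) * (#|K k.+1| - 1) * \prod_(k.+2 <= i < n) #|K i|)%N).
Proof.
(* (ii) fails by the last hypothesis. *)
move=> _ subK subK_mono delta_ge2 r_gt0 lt_kn _ _ _ not_i _ ell_r.
have d_mono i j : (i <= j < n)%N -> (#|K i| <= #|K j|)%N.
  by move=> /subK_mono; apply: subset_leq_card.
have ell_ds : (ell + #|K s| = #|K k| + (#|K s| - delta + 1))%N.
  by move: ell_r; lia.
have lt_r_ds : (#|K s| - delta + 1 < #|K s|)%N.
  by have := card_subfield_ge2 (subK s (ltn_ord s)); lia.
have le_sk : (s <= k)%N.
  rewrite leqNgt; apply/negP => lt_ks; apply: not_i; split; first by have := ltn_ord s; lia.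
  by apply: d_mono; rewrite lt_ks ltn_ord.
have lt_ds_dk1 : (k.+1 < n)%N -> (#|K s| < #|K k.+1|)%N.
  by move=> lt_k1n; rewrite ltnNge; apply/negP => le; apply: not_i; split => //; lia.
split.
  exact: (extremal_codeword subK lt_r_ds lt_kn le_sk ell_ds r_gt0).
exact: (weight_bound_le_hwt subK lt_r_ds lt_kn le_sk ell_ds r_gt0 d_mono lt_ds_dk1).
Qed.
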